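(* Let $\mathcal{I}$ be an ideal of the multiloop algebra $\mathcal{L}$, and let $Y=\sum_{\bar r\in G}\sum_{n=1}^{\dim\mathfrak{g}_{\bar r}} x_{\bar r n}\otimes \pi_{\bar r n}(Y)\in\mathcal{I}$. Then $$x_{\bar k i}\otimes t^{k-\ell}\pi_{\bar\ell j}(Y)\in\mathcal{I}$$ for all $k,\ell\in\mathbb{Z}^N$, $1\le i\le \dim\mathfrak{g}_{\bar k}$ and $1\le j\le\dim\mathfrak{g}_{\bar\ell}$.
   Context: $F$ is an algebraically closed field of characteristic zero; $\mathfrak{g}$ is a finite-dimensional simple Lie algebra over $F$; $\sigma_1,\dots,\sigma_N$ are pairwise commuting automorphisms of $\mathfrak{g}$ of finite orders $m_1,\dots,m_N$; for each $i$, $\xi_i\in F$ is a fixed primitive $m_i$-th root of unity. Let $G=\mathbb{Z}/m_1\mathbb{Z}\times\cdots\times\mathbb{Z}/m_N\mathbb{Z}$ and write $\bar k$ for the image of $k\in\mathbb{Z}^N$ in $G$. Set $\mathfrak{g}_{\bar k}=\{x\in\mathfrak{g}: \sigma_i x=\xi_i^{k_i}x \text{ for } i=1,\dots,N\}$, so $\mathfrak{g}=\bigoplus_{\bar k\in G}\mathfrak{g}_{\bar k}$. Let $R=F[t_1^{\pm1},\dots,t_N^{\pm1}]$, $t^k=t_1^{k_1}\cdots t_N^{k_N}$, $R_{\bar 0}=F[t_1^{\pm m_1},\dots,t_N^{\pm m_N}]$ and $R_{\bar k}=t^kR_{\bar 0}$ (so $R=\bigoplus_{\bar k\in G}R_{\bar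 k}$). The multiloop algebra is $\mathcal{L}=\mathcal{L}(\mathfrak{g};\sigma_1,\dots,\sigma_N)=\bigoplus_{k\in\mathbb{Z}^N}\mathfrak{g}_{\bar k}\otimes Ft^k=\bigoplus_{\bar k\in G}\mathfrak{g}_{\bar k}\otimes R_{\bar k}\subseteq \mathfrak{g}\otimes R$, with bracket $[x\otimes f,y\otimes g]=[x,y]\otimes fg$. For each $\bar k\in G$ fix a basis $\{x_{\bar k j}: j=1,\dots,\dim\mathfrak{g}_{\bar k}\}$ of $\mathfrak{g}_{\bar k}$, so $\mathcal{L}=\bigoplus_{\bar k}\bigoplus_j Fx_{\bar kj}\otimes R_{\bar k}$; let $\pi_{\bar kj}:\mathcal{L}\to R_{\bar k}$ be the projection onto the summand $Fx_{\bar kj}\otimes R_{\bar k}$ followed by the identification $x_{\bar kj}\otimes f\mapsto f$. *)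

From HB Require Import structures.
From mathcomp Require Import all_boot all_order all_algebra.
Set Implicit Arguments. Unset Strict Implicit. Unset Printing Implicit Defensive.
Import Order.TTheory GRing.Theory Num.Theory.
Local Open Scope ring_scope.

(* Z^N, the exponent lattice of Laurent monomials t^k. *)
Definition Zn (N : nat) := {ffun 'I_N -> int}.

Definition is_lie_bracket (F : fieldType) (g : vectType F) (br : g -> g -> g) : Prop :=
  [/\ forall a x y z, br (a *: x + y) z = a *: br x z + br y z,
      forall a x y z, br z (a *: x + y) = a *: br z x + br z y,
      forall x, br x x = 0 &
      forall x y z, br x (br y z) + br y (br z x) + br z (br x y) = 0].

Definition lie_ideal (F : fieldType) (g : vectType F) (br : g -> g -> g)
  (U : {vspace g}) : Prop := forall x u, u \in U -> br x u \in U.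

Definition simple_lie (F : fieldType) (g : vectType F) (br : g -> g -> g) : Prop :=
  [/\ is_lie_bracket br, (exists x y, br x y != 0) &
      forall U : {vspace g}, lie_ideal br U -> U = 0%VS \/ U = fullv].

Definition lie_aut (F : fieldType) (g : vectType F) (br : g -> g -> g)
  (s : 'End(g)) : Prop :=
  lker s = 0%VS /\ forall x y, s (br x y) = br (s x) (s y).

Definition has_order (F : fieldType) (g : vectType F) (s : 'End(g)) (m : nat) : Prop :=
  [/\ (0 < m)%N, (forall x, iter m (fun v => s v) x = x) &
      forall k, (0 < k < m)%N -> exists x, iter k (fun v => s v) x != x].

Definition grade (F : fieldType) (g : vectType F) (N : nat)
  (sigma : 'I_N -> 'End(g)) (xi : 'I_N -> F) (k : Zn N) : {vspace g} :=
  (\bigcap_(i < N) passmx.leigenspace (sigma i) (xi i ^ k i))%VS.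

(* canonical representative of \bar k in G = prod Z/m_i *)
Definition cls (N : nat) (m : 'I_N -> nat) (k : Zn N) : Zn N :=
  [ffun i => (k i %% (m i)%:Z)%Z].

(* Elements of g (x) R are finitely supported maps Z^N -> g, k |-> coefficient of t^k. *)
Definition supported (F : fieldType) (g : vectType F) (N : nat)
  (X : Zn N -> g) (s : seq (Zn N)) : Prop := forall k, k \notin s -> X k = 0.

Definition inLoop (F : fieldType) (g : vectType F) (N : nat)
  (sigma : 'I_N -> 'End(g)) (xi : 'I_N -> F) (X : Zn N -> g) : Prop :=
  (exists s, supported X s) /\ forall k, X k \in grade sigma xi k.

(* bracket [X, Y] in g (x) R, computed from support lists s1 of X and s2 of Y *)
Definition loop_br (F : fieldType) (g : vectType F) (N : nat) (br : g -> g -> g)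
  (s1 s2 : seq (Zn N)) (X Y : Zn N -> g) : Zn N -> g :=
  fun k => \sum_(a <- undup s1) \sum_(b <- undup s2 | a + b == k) br (X a) (Y b).

Definition loop_ideal (F : fieldType) (g : vectType F) (N : nat) (br : g -> g -> g)
  (sigma : 'I_N -> 'End(g)) (xi : 'I_N -> F) (I : (Zn N -> g) -> Prop) : Prop :=
  [/\ forall X, I X -> inLoop sigma xi X,
      I (fun _ => 0),
      forall X Y, I X -> I Y -> I (fun k => X k + Y k),
      forall (c : F) X, I X -> I (fun k => c *: X k) &
      forall X Y s1 s2, inLoop sigma xi X -> supported X s1 ->
        I Y -> supported Y s2 -> I (loop_br br s1 s2 X Y)].

(* pi_{r j}(Y) in R_r, as a map Z^N -> F (coefficient of t^a);
   j indexes the basis B r of g_r (0-based). *)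
Definition pcoord (F : fieldType) (g : vectType F) (N : nat) (m : 'I_N -> nat)
  (B : Zn N -> seq g) (r : Zn N) (j : 'I_(size (B r))) (Y : Zn N -> g) : Zn N -> F :=
  fun a => if cls m a == r then coord (in_tuple (B r)) j (Y a) else 0.
Arguments pcoord {F g N} m B r j Y _.

(* Call an endomorphism f of g admissible if it is a finite sum of maps f_p,
   each homogeneous of some degree d_p for the Z^N-grading of g and such that
   f_p (x) t^d' preserves I for every d' congruent to d_p.  The admissible
   maps form an algebra containing ad y for every y (bracket with the
   homogeneous components of y, placed in L), so by simplicity of g it has
   no invariant subspace.  Burnside's theorem over the algebraically closed
   field F then makes the rank-one map e : v |-> pi_{l j}(v) x_{k i}
   admissible; its summands of degree congruent to k - l add up to phi with
   phi (x) t^(k-l) preserving I, and this operator sends Y to the element of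
   the lemma. *)

From HB Require Import structures.
From mathcomp Require Import all_boot all_order all_algebra.
From Stdlib Require Import Classical FunctionalExtensionality.
Set Implicit Arguments. Unset Strict Implicit. Unset Printing Implicit Defensive.
Import Order.TTheory GRing.Theory Num.Theory.
Local Open Scope ring_scope.

Lemma exists_lfun (K : fieldType) (V W : vectType K) (f : V -> W) :
  linear f -> exists phi : 'Hom(V, W), forall v, phi v = f v.
Proof.
move=> lf; pose fL : {linear V -> W} := HB.pack f (GRing.isLinear.Build _ _ _ _ f lf).
by exists (linfun fL) => v; rewrite lfunE.
Qed.

Lemma vspace_of_pred (K : fieldType) (V : vectType K) (P : V -> Prop) :
  P 0 -> (forall x y, P x -> P y -> P (x + y)) -> (forall c x, P x -> P (c *: x)) ->
  exists U : {vspace V}, forall x, x \in U <-> P x.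
Proof.
move=> P0 PD PZ.
suff grow : forall k (U : {vspace V}), (\dim {:V} - \dim U <= k)%N ->
    (forall x, x \in U -> P x) -> exists U' : {vspace V}, forall x, x \in U' <-> P x.
  by apply: (grow _ 0%VS (leqnn _)) => x; rewrite memv0 => /eqP ->.
elim=> [|k IH] U codimU PU.
  exists U => x; split=> [|_]; first exact: PU.
  have /eqP -> : (U == fullv)%VS by rewrite eqEdim subvf -subn_eq0 -leqn0.
  exact: memvf.
have [[x [Px xU]]|closed] := classic (exists x, P x /\ x \notin U); last first.
  exists U => x; split=> [|Px]; first exact: PU.
  by apply: NNPP => xU; apply: closed; exists x; split=> //; apply/negP.
apply: (IH (U + <[x]>)%VS); last first.
  by move=> _ /memv_addP[u uU [_ /vlineP[c ->] ->]]; apply: PD; [apply: PU | apply: PZ].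
have ltU : (\dim U < \dim (U + <[x]>)%VS)%N.
  rewrite ltn_neqAle (dimv_leqif_sup (addvSl U <[x]>)) dimvS ?addvSl // andbT.
  by apply: contra xU => /subvP; apply; apply: (subvP (addvSr U _)); apply: memv_line.
move: codimU; rewrite !leq_subLR => codimU; apply: leq_trans codimU _.
by rewrite addnS -addSn leq_add2r.
Qed.

Lemma line_coord (K : fieldType) (V : vectType K) (z w : V) :
  w \in <[z]>%VS -> w = coord [tuple z] 0 w *: z.
Proof.
move=> wz; rewrite {1}(@coord_span _ _ _ [tuple z] w) ?span_seq1 //.
by rewrite big_ord1.
Qed.

Lemma limg_eq0 (K : fieldType) (V : vectType K) (f : 'End(V)) : limg f = 0%VS -> f = 0.
Proof.
move=> f0; apply/lfunP => v; rewrite zero_lfunE; apply/eqP.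
by rewrite -memv0 -f0 memv_img ?memvf.
Qed.

Lemma exists_eigvec_in (F : closedFieldType) (V : vectType F) (R : 'End(V))
  (W : {vspace V}) : (R @: W <= W)%VS -> W != 0%VS ->
  exists l w, [/\ w \in W, w != 0 & R w = l *: w].
Proof.
move=> RW W0; set r := \dim W; set X := vbasis W.
have r0 : (0 < r)%N by rewrite lt0n dimv_eq0.
pose C : 'M[F]_r := \matrix_(j, i) coord X i (R X`_j).
have : size (char_poly C) != 1%N by rewrite size_char_poly -(prednK r0).
case/closed_rootP=> l; rewrite -eigenvalue_root_char => /eigenvalueP[v vC v0].
have XW (j : 'I_r) : X`_j \in W by apply: vbasis_mem; rewrite mem_nth // size_tuple.
exists l, (\sum_j v 0 j *: X`_j); split.
- by apply: memv_suml => j _; apply: memvZ.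
- apply: contra v0 => /eqP w0; apply/eqP/rowP => j; rewrite mxE.
  by have /freeP := basis_free (vbasisP W); move/(_ (fun j => v 0 j) w0 j).
have RX (j : 'I_r) : R X`_j = \sum_i C j i *: X`_i.
  rewrite {1}(coord_vbasis (_ : R X`_j \in W)); last by apply: (subvP RW); apply: memv_img.
  by apply: eq_bigr => i _; rewrite mxE.
rewrite linear_sum (eq_bigr (fun j => \sum_i (v 0 j * C j i) *: X`_i)); last first.
  by move=> j _; rewrite linearZ /= RX scaler_sumr; apply: eq_bigr => i _; rewrite scalerA.
rewrite exchange_big /= scaler_sumr; apply: eq_bigr => i _.
rewrite -scaler_suml scalerA; congr (_ *: _).
have := congr1 (fun M : 'rV_r => M 0 i) vC; rewrite /= !mxE => <-.
by apply: eq_bigr => j _; rewrite mxE.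
Qed.

Lemma dim_rV (K : fieldType) r : \dim {: 'rV[K]_r} = r.
Proof. by rewrite dimvf /dim /= mul1n. Qed.

Section LineMaps.
Variables (K : fieldType) (V : vectType K) (z : V).

Definition into_line (f : 'End(V)) := forall v, f v \in <[z]>%VS.

Lemma dim_line_maps (Z : {vspace 'End(V)}) :
  (forall f, f \in Z -> into_line f) -> (\dim Z <= \dim {:V})%N.
Proof.
move=> Zline; set n := \dim {:V}; set e := vbasis {:V}.
have [Psi PsiE] : exists Psi : 'Hom('End(V), 'rV[K]_n),
    forall f, Psi f = \row_i coord [tuple z] 0 (f e`_i).
  apply: exists_lfun => c f g; apply/rowP => i.
  by rewrite !mxE add_lfunE scale_lfunE linearP.
rewrite -(@limg_dim_eq _ _ _ Psi); last first.
  apply/eqP; rewrite -subv0; apply/subvP => f; rewrite memv_cap memv_ker memv0.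
  case/andP => /Zline fline /eqP; rewrite PsiE => Psi0; apply/eqP.
  apply/(fullv_lfunP _ _ (span_basis (vbasisP _))) => w /(nthP 0)[i ilt <-].
  rewrite zero_lfunE (line_coord (fline _)).
  have ilt' : (i < n)%N by rewrite size_tuple in ilt.
  have := congr1 (fun M : 'rV_ _ => M 0 (Ordinal ilt')) Psi0.
  by rewrite !mxE => ->; rewrite scale0r.
by apply: leq_trans (dimvS (subvf _)) _; rewrite dim_rV.
Qed.

Lemma dim_separating_line_maps (D : {vspace 'End(V)}) :
  (forall f, f \in D -> into_line f) ->
  (forall v, (forall f, f \in D -> f v = 0) -> v = 0) -> (\dim {:V} <= \dim D)%N.
Proof.
move=> Dline Dsep; set r := \dim D; set hs := vbasis D.
have hsD (k : 'I_r) : hs`_k \in D by apply: vbasis_mem; rewrite mem_nth // size_tuple.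
have [Phi PhiE] : exists Phi : 'Hom(V, 'rV[K]_r),
    forall v, Phi v = \row_k coord [tuple z] 0 (hs`_k v).
  by apply: exists_lfun => c v w; apply/rowP => k; rewrite !mxE !linearP.
rewrite -(@limg_dim_eq _ _ _ Phi fullv); last first.
  apply/eqP; rewrite -subv0; apply/subvP => v; rewrite memv_cap memv_ker memv0.
  case/andP => _ /eqP; rewrite PhiE => Phi0; apply/eqP/Dsep => f fD.
  rewrite (coord_vbasis fD) sum_lfunE big1 // => k _.
  rewrite scale_lfunE (line_coord (Dline _ (hsD k) v)).
  have := congr1 (fun M : 'rV_ _ => M 0 k) Phi0.
  by rewrite !mxE => ->; rewrite !scale0r scaler0.
by apply: leq_trans (dimvS (subvf _)) _; rewrite dim_rV.
Qed.

Lemma separating_line_maps_full (D : {vspace 'End(V)}) (h : 'End(V)) :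
  (forall f, f \in D -> into_line f) ->
  (forall v, (forall f, f \in D -> f v = 0) -> v = 0) -> into_line h -> h \in D.
Proof.
move=> Dline Dsep hline.
have [Z ZE] : exists Z : {vspace 'End(V)}, forall f, f \in Z <-> into_line f.
  apply: vspace_of_pred.
  - by move=> v; rewrite zero_lfunE mem0v.
  - by move=> f g hf hg v; rewrite add_lfunE memvD.
  - by move=> c f hf v; rewrite scale_lfunE memvZ.
have DZ : (D <= Z)%VS by apply/subvP => f /Dline /ZE.
have /eqP -> : (D == Z)%VS.
  rewrite eqEdim DZ (leq_trans (dim_line_maps _) (dim_separating_line_maps Dline Dsep)) //.
  by move=> f /ZE.
exact/ZE.
Qed.

End LineMaps.

Section Burnside.
Variables (F : closedFieldType) (V : vectType F) (A : 'End(V) -> Prop).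
Hypothesis A_add : forall f g, A f -> A g -> A (f + g).
Hypothesis A_scale : forall c f, A f -> A (c *: f).
Hypothesis A_comp : forall f g, A f -> A g -> A (f \o g)%VF.
Hypothesis A_nz : exists f, A f /\ f != 0.
Hypothesis A_irr : forall U : {vspace V},
  (forall f u, A f -> u \in U -> f u \in U) -> U = 0%VS \/ U = fullv.

Lemma alg0 : A 0.
Proof. by case: A_nz => f [Af _]; rewrite -(scale0r f); apply: A_scale. Qed.

Lemma invariant_pred (P : V -> Prop) :
  P 0 -> (forall x y, P x -> P y -> P (x + y)) -> (forall c x, P x -> P (c *: x)) ->
  (forall f v, A f -> P v -> P (f v)) -> (forall v, P v -> v = 0) \/ (forall v, P v).
Proof.
move=> P0 PD PZ PA; have [U UE] := vspace_of_pred P0 PD PZ.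
case: (A_irr (U := U)) => [f u Af /UE Pu|U0|Uf]; first by apply/UE; apply: PA.
  by left=> v /UE; rewrite U0 memv0 => /eqP.
by right=> v; apply/UE; rewrite Uf memvf.
Qed.

Lemma alg_moves v : v != 0 -> exists f, A f /\ f v != 0.
Proof.
move=> v0; apply: NNPP => none.
case: (@invariant_pred (fun w => forall f, A f -> f w = 0)).
- by move=> f _; rewrite linear0.
- by move=> x y hx hy f Af; rewrite linearD /= hx ?hy ?addr0.
- by move=> c x hx f Af; rewrite linearZ /= hx ?scaler0.
- by move=> f w Af hw h Ah; rewrite -comp_lfunE; apply: hw; apply: A_comp.
- move=> triv; case/eqP: v0; apply: triv => f Af; apply: NNPP => fv.
  by apply: none; exists f; split=> //; apply/eqP.
- move=> all; case: A_nz => f [Af /lfunPn[w]]; rewrite zero_lfunE.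
  by rewrite all ?eqxx.
Qed.

Lemma alg_transitive v : v != 0 -> forall w, exists f, A f /\ f v = w.
Proof.
move=> v0; case: (@invariant_pred (fun w => exists f, A f /\ f v = w)).
- by exists 0; rewrite zero_lfunE; split=> //; apply: alg0.
- move=> _ _ [f [Af <-]] [g [Ag <-]].
  by exists (f + g); rewrite add_lfunE; split=> //; apply: A_add.
- by move=> c _ [f [Af <-]]; exists (c *: f); rewrite scale_lfunE; split=> //; apply: A_scale.
- move=> f _ Af [g [Ag <-]].
  by exists (f \o g)%VF; rewrite comp_lfunE; split=> //; apply: A_comp.
- move=> triv; have [f [Af]] := alg_moves v0.
  by rewrite (triv (f v)) ?eqxx //; exists f.
- by [].
Qed.

Lemma alg_min_rank : exists T, [/\ A T, T != 0 &
  forall T', A T' -> T' != 0 -> (\dim (limg T) <= \dim (limg T'))%N].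
Proof.
have [T0 [AT0 T0nz]] := A_nz.
move: {2}(\dim (limg T0)) (erefl (\dim (limg T0))) => n.
elim/ltn_ind: n T0 AT0 T0nz => n IH T AT Tnz dimT.
have [[T' [AT' T'nz lt]]|none] :=
  classic (exists T', [/\ A T', T' != 0 & (\dim (limg T') < n)%N]).
  exact: IH lt T' AT' T'nz erefl.
exists T; split=> // T' AT' T'nz; rewrite dimT leqNgt; apply/negP => lt.
by apply: none; exists T'.
Qed.

Variable T : 'End(V).
Hypotheses (AT : A T) (T0 : T != 0).
Hypothesis Tmin : forall T', A T' -> T' != 0 -> (\dim (limg T) <= \dim (limg T'))%N.

(* Schur-type step: T S T is a multiple of T for every S in A, since
   T S T - l T has smaller rank than T when l is an eigenvalue of T S on
   the image of T. *)
Lemma min_rank_sandwich S : A S -> exists l, (T \o S \o T)%VF = l *: T.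
Proof.
move=> AS; pose R := (T \o S)%VF.
have RW : (R @: limg T <= limg T)%VS.
  apply/subvP => _ /memv_imgP[w /memv_imgP[v _ ->] ->].
  by rewrite comp_lfunE memv_img ?memvf.
have W0 : limg T != 0%VS by apply: contra T0 => /eqP /limg_eq0 ->.
have [l [w [wT w0 Rw]]] := exists_eigvec_in RW W0.
exists l; pose Rl : 'End(V) := R - l *: \1%VF.
have ME : (Rl \o T)%VF = (T \o S \o T)%VF + (- l) *: T.
  apply/lfunP => v; rewrite !(comp_lfunE, add_lfunE, scale_lfunE, opp_lfunE, id_lfunE).
  by rewrite scaleNr.
have AM : A (Rl \o T)%VF.
  by rewrite ME; apply: A_add; [apply: A_comp => //; apply: A_comp | apply: A_scale].
have ltM : (\dim (limg (Rl \o T)) < \dim (limg T))%N.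
  rewrite limg_comp -(limg_ker_dim Rl (limg T)) -[X in (X < _)%N]add0n ltn_add2r.
  rewrite lt0n dimv_eq0; apply/negP => /eqP cap0.
  have : w \in (limg T :&: lker Rl)%VS.
    rewrite memv_cap wT memv_ker !(add_lfunE, opp_lfunE, scale_lfunE, id_lfunE) Rw.
    by rewrite subrr eqxx.
  by rewrite cap0 memv0 (negPf w0).
have [M0|Mnz] := eqVneq (Rl \o T)%VF 0.
  by apply/eqP; rewrite -subr_eq0 -scaleNr -ME M0.
by have := Tmin AM Mnz; rewrite leqNgt ltM.
Qed.

Lemma min_rank_one : (\dim (limg T) <= 1)%N.
Proof.
rewrite leqNgt; apply/negP => rank2.
have [x] := lfunPn T0; rewrite zero_lfunE => Tx.
have [y Ty] : exists y, T y \notin <[T x]>%VS.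
  apply: NNPP => none.
  have sub : (limg T <= <[T x]>)%VS.
    apply/subvP => _ /memv_imgP[y _ ->]; apply: NNPP => ny; apply: none.
    by exists y; apply/negP.
  by move: (dimvS sub); rewrite dim_vline Tx leqNgt rank2.
have [S [AS STx]] := alg_transitive Tx y.
have [l TST] := min_rank_sandwich AS.
move: Ty; have := congr1 (fun f : 'End(V) => f x) TST.
by rewrite /= !comp_lfunE scale_lfunE STx => ->; rewrite memvZ ?memv_line.
Qed.

Lemma min_rank_image x : T x != 0 -> into_line (T x) T.
Proof.
move=> Tx v; have sub : (<[T x]> <= limg T)%VS by rewrite -memvE memv_img ?memvf.
have /eqP -> : (<[T x]> == limg T)%VS by rewrite eqEdim sub dim_vline Tx min_rank_one.
by rewrite memv_img ?memvf.
Qed.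

(* Burnside: A contains every endomorphism with image in a line <[z]>.
   The maps a \o T with a u = z realise a line map whose kernel is
   proper, so the line maps in A form a separating family. *)
Lemma alg_line_maps (z : V) (h : 'End(V)) : into_line z h -> A h.
Proof.
move=> hline; have [z0|z0] := eqVneq z 0.
  suff -> : h = 0 by apply: alg0.
  by apply/lfunP => v; rewrite zero_lfunE; move: (hline v); rewrite z0 memv0 => /eqP.
have [x] := lfunPn T0; rewrite zero_lfunE => Tx; set u := T x.
have Tline := min_rank_image Tx.
have [a [Aa au]] := alg_transitive Tx z.
have [D DE] : exists D : {vspace 'End(V)}, forall f, f \in D <-> into_line z f /\ A f.
  apply: vspace_of_pred.
  - by split; [move=> v; rewrite zero_lfunE mem0v | apply: alg0].
  - move=> f g [hf Af] [hg Ag]; split; last by apply: A_add.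
    by move=> v; rewrite add_lfunE memvD.
  - move=> c f [hf Af]; split; last by apply: A_scale.
    by move=> v; rewrite scale_lfunE memvZ.
suff : h \in D by case/DE.
apply: separating_line_maps_full hline; first by move=> f /DE[].
move=> v v_killed; case: (@invariant_pred (fun w => forall f, f \in D -> f w = 0)).
- by move=> f _; rewrite linear0.
- by move=> x1 y1 hx hy f fD; rewrite linearD /= hx ?hy ?addr0.
- by move=> c x1 hx f fD; rewrite linearZ /= hx ?scaler0.
- move=> b w Ab hw f /DE[fline Af]; rewrite -comp_lfunE; apply: hw; apply/DE.
  by split; [move=> w'; rewrite comp_lfunE | apply: A_comp].
- by move=> triv; apply: triv.
- move=> all; case/eqP: z0; rewrite -au /u -comp_lfunE; apply: all; apply/DE.
  split; last exact: A_comp.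
  by move=> w; rewrite comp_lfunE (line_coord (Tline w)) linearZ /= au memvZ ?memv_line.
Qed.

End Burnside.

Lemma dvdn_shift_eq (M u c : nat) : (u < M)%N -> (c < M)%N -> (M %| M - u + c)%N = (c == u).
Proof.
move=> uM cM; rewrite addnBAC ?(ltnW uM) // -eqn_mod_dvd; last first.
  by rewrite (leq_trans (ltnW uM)) ?leq_addr.
by rewrite modnDl !modn_small.
Qed.

Section Grading.
(* The Z^N-grading of g defined by commuting automorphisms sigma_i of finite
   orders m_i: its pieces are the joint eigenspaces [grade sigma xi k], and
   the grade_proj are the projections onto them, built as averages of
   powers of the sigma_i. *)
Variables (F : fieldType) (g : vectType F) (N : nat)
  (sigma : 'I_N -> 'End(g)) (m : 'I_N -> nat) (xi : 'I_N -> F).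
Hypothesis hF : [pchar F] =i pred0.
Hypothesis hcomm : forall i j, (sigma i \o sigma j = sigma j \o sigma i)%VF.
Hypothesis hord : forall i, has_order (sigma i) (m i).
Hypothesis hxi : forall i, (m i).-primitive_root (xi i).

Local Notation gr := (grade sigma xi).

Lemma m_gt0 i : (0 < m i)%N.
Proof. by case: (hord i). Qed.

Lemma xi_neq0 i : xi i != 0.
Proof.
apply/eqP => x0; have := prim_expr_order (hxi i); rewrite x0 expr0n.
by rewrite eqn0Ngt m_gt0 => /eqP; rewrite eq_sym oner_eq0.
Qed.

Lemma m_neq0 i : ((m i)%:R : F) != 0.
Proof. by have /pcharf0P -> : has_pchar0 F by []; rewrite -lt0n m_gt0. Qed.

Lemma modm_ge0 i (z : int) : (0 <= z %% (m i)%:Z)%Z.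
Proof. by rewrite modz_ge0 // eqz_nat -lt0n m_gt0. Qed.

Lemma xi_expz i (z : int) : xi i ^ z = xi i ^+ `|(z %% (m i)%:Z)%Z|%N.
Proof.
rewrite {1}(divz_eq z (m i)%:Z) expfzDr ?xi_neq0 //.
have -> : xi i ^ ((z %/ (m i)%:Z)%Z * (m i)%:Z) = 1.
  by rewrite mulrC -exprz_exp -exprnP (prim_expr_order (hxi i)) exp1rz.
by rewrite mul1r exprnP gez0_abs ?modm_ge0.
Qed.

Lemma modm_lt i (z : int) : (`|(z %% (m i)%:Z)%Z| < m i)%N.
Proof.
rewrite -ltz_nat gez0_abs ?modm_ge0 //.
by rewrite -[X in (_ < X)]gez0_abs ?ltz_pmod // ltz_nat m_gt0.
Qed.

Lemma mem_grade k v : v \in gr k <-> forall i, sigma i v = xi i ^ k i *: v.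
Proof.
rewrite memvE; split.
  move/subv_bigcapP => h i; have := h i isT; rewrite -memvE memv_ker.
  by rewrite !(add_lfunE, opp_lfunE, scale_lfunE, id_lfunE) subr_eq0 => /eqP.
move=> h; apply/subv_bigcapP => i _; rewrite -memvE memv_ker.
by rewrite !(add_lfunE, opp_lfunE, scale_lfunE, id_lfunE) h subrr.
Qed.

Lemma mem_gradeN k v :
  v \in gr k <-> forall i, sigma i v = xi i ^+ `|(k i %% (m i)%:Z)%Z|%N *: v.
Proof. by rewrite mem_grade; split=> h i; rewrite h ?xi_expz. Qed.

Lemma grade_cls k : gr (cls m k) = gr k.
Proof.
apply/vspaceP => v; apply/idP/idP => /mem_gradeN h; apply/mem_gradeN => i;
  by rewrite h ffunE modz_mod.
Qed.

Lemma clsP (a b : Zn N) : cls m a = cls m b <-> forall i, ((m i)%:Z %| a i - b i)%Z.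
Proof.
split=> [h i|h].
  by have := congr1 (fun f : Zn N => f i) h; rewrite !ffunE -eqz_mod_dvd => ->.
by apply/ffunP => i; rewrite !ffunE; apply/eqP; rewrite eqz_mod_dvd.
Qed.

Lemma cls_diff (a b c d : Zn N) :
  a - b = c - d -> cls m a = cls m b -> cls m c = cls m d.
Proof.
move=> e /clsP h; apply/clsP => i.
by have := congr1 (fun f : Zn N => f i) e; rewrite !ffunE => <-.
Qed.

Lemma cls_eq_mod b c : (cls m b == cls m c) =
  all (fun i => `|(b i %% (m i)%:Z)%Z|%N == `|(c i %% (m i)%:Z)%Z|%N) (enum 'I_N).
Proof.
apply/eqP/allP => [h i _|h].
  by have := congr1 (fun f : Zn N => f i) h; rewrite !ffunE => ->.
apply/ffunP => i; rewrite !ffunE; have /eqP e := h i (mem_enum _ i).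
by rewrite -[LHS]gez0_abs ?modm_ge0 // e gez0_abs ?modm_ge0.
Qed.

Definition sigma_pow i s : 'End(g) := iter s (fun h => sigma i \o h)%VF \1%VF.

Lemma sigma_powE i s v : sigma_pow i s v = iter s (sigma i) v.
Proof. by elim: s => [|s IH] /=; rewrite ?id_lfunE // comp_lfunE -IH. Qed.

Lemma sigma_pow_comm i j s v : sigma j (sigma_pow i s v) = sigma_pow i s (sigma j v).
Proof.
rewrite !sigma_powE; elim: s => [|s IH] //=.
by rewrite -IH -!comp_lfunE hcomm.
Qed.

Lemma sigma_pow_eig i s v c : sigma i v = c *: v -> sigma_pow i s v = c ^+ s *: v.
Proof.
move=> h; rewrite sigma_powE; elim: s => [|s IH] /=; first by rewrite scale1r.
by rewrite IH linearZ /= h scalerA exprSr.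
Qed.

(* The projection onto the xi_i^u-eigenspace of sigma_i:
   (1/m) sum_s xi_i^(-u s) sigma_i^s. *)
Definition eig_proj i u : 'End(g) :=
  (m i)%:R^-1 *: \sum_(s < m i) xi i ^+ ((m i - u) * s) *: sigma_pow i s.

Lemma eig_projE i u v : eig_proj i u v =
  (m i)%:R^-1 *: \sum_(s < m i) xi i ^+ ((m i - u) * s) *: sigma_pow i s v.
Proof.
rewrite scale_lfunE sum_lfunE; congr (_ *: _).
by apply: eq_bigr => s _; rewrite scale_lfunE.
Qed.

Lemma sum_xi_pow i (a : nat) : \sum_(s < m i) (xi i ^+ a) ^+ s =
  if (m i %| a)%N then (m i)%:R else 0.
Proof.
case: ifP => [dv|ndv].
  rewrite (prim_order_dvd (hxi i)) in dv; rewrite (eqP dv).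
  by rewrite (eq_bigr (fun _ => 1)) ?sumr_const ?card_ord // => s _; rewrite expr1n.
have z1 : xi i ^+ a - 1 != 0 by rewrite subr_eq0 -(prim_order_dvd (hxi i)) ndv.
apply: (mulfI z1); rewrite mulr0 -subrX1.
by rewrite exprAC (prim_expr_order (hxi i)) expr1n subrr.
Qed.

Lemma eig_proj_eig i u v c : (u < m i)%N -> (c < m i)%N ->
  sigma i v = xi i ^+ c *: v -> eig_proj i u v = (c == u)%:R *: v.
Proof.
move=> um cm h; rewrite eig_projE.
rewrite (eq_bigr (fun s : 'I_(m i) => (xi i ^+ (m i - u + c)) ^+ s *: v)); last first.
  move=> s _; rewrite (sigma_pow_eig s h) scalerA; congr (_ *: _).
  by rewrite -!exprM -exprD mulnDl.
rewrite -scaler_suml sum_xi_pow dvdn_shift_eq // scalerA.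
by case: (c == u); rewrite ?mulr0 // mulVf ?m_neq0.
Qed.

Lemma eig_proj_comm i j u v : sigma j (eig_proj i u v) = eig_proj i u (sigma j v).
Proof.
rewrite !eig_projE linearZ linear_sum /=; congr (_ *: _); apply: eq_bigr => s _.
by rewrite linearZ /= sigma_pow_comm.
Qed.

Lemma eig_proj_sigma i u v : (u < m i)%N ->
  sigma i (eig_proj i u v) = xi i ^+ u *: eig_proj i u v.
Proof.
move=> um; rewrite !eig_projE linearZ linear_sum /= scalerA mulrC -scalerA.
congr (_ *: _).
pose G (s : nat) := xi i ^+ ((m i - u) * s) *: sigma_pow i s v.
rewrite (eq_bigr (fun s : 'I_(m i) => xi i ^+ u *: G s.+1)); last first.
  move=> s _; rewrite linearZ /= /G !sigma_powE scalerA; congr (_ *: _).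
  by rewrite -exprD mulnS addnA (subnKC (ltnW um)) exprD (prim_expr_order (hxi i)) mul1r.
rewrite -scaler_sumr; congr (_ *: _); apply: (addIr (G 0%N)).
have cyc : G (m i) = G 0%N.
  rewrite /G !sigma_powE /= muln0 mulnC exprM (prim_expr_order (hxi i)) expr1n expr0.
  by case: (hord i) => _ -> _.
rewrite -[in RHS]cyc -(big_ord_recr (m i) (fun s => G s)) big_ord_recl addrC.
by congr (_ + _); apply: eq_bigr => s _; rewrite lift0.
Qed.

Lemma sum_eig_proj i v : \sum_(u < m i) eig_proj i u v = v.
Proof.
under eq_bigr do rewrite eig_projE.
rewrite -scaler_sumr exchange_big /=.
have coef (s : nat) : \sum_(u < m i) xi i ^+ ((m i - u) * s) =
    xi i ^+ s * (if (m i %| s)%N then (m i)%:R else 0).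
  rewrite (reindex_inj rev_ord_inj) /= -sum_xi_pow mulr_sumr; apply: eq_bigr => u _.
  by rewrite subKn // mulSn exprD mulnC exprM.
under eq_bigr do rewrite -scaler_suml coef.
rewrite (bigD1 (Ordinal (m_gt0 i))) //= big1 ?addr0; last first.
  move=> s /eqP s0; case: ifP => [dv|]; last by rewrite mulr0 scale0r.
  case: s0; apply: val_inj => /=; apply/eqP; rewrite -leqn0 leqNgt.
  by apply/negP => s_gt0; have := dvdn_leq s_gt0 dv; rewrite leqNgt ltn_ord.
by rewrite dvdn0 expr0 mul1r id_lfunE scalerA mulVf ?m_neq0 // scale1r.
Qed.

Lemma sum_joint_eigvecs (l : seq 'I_N) v : exists ws : seq g,
  v = \sum_(w <- ws) w /\ forall w, w \in ws ->
  exists t : 'I_N -> nat, forall i, i \in l -> sigma i w = xi i ^+ t i *: w.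
Proof.
elim: l v => [|i l IH] v.
  by exists [:: v]; split=> [|w _]; [rewrite big_seq1 | exists (fun _ => 0%N)].
have [ws [-> hws]] := IH v.
exists [seq eig_proj i u w | w <- ws, u <- iota 0 (m i)]; split.
  rewrite big_allpairs_dep; apply: eq_bigr => w _.
  by rewrite -{1}(subn0 (m i)) -/(index_iota 0 (m i)) big_mkord sum_eig_proj.
move=> w' /allpairsP[[w u] /= [wws]]; rewrite mem_iota add0n => um ->.
have [t ht] := hws w wws.
exists (fun j => if j == i then u else t j) => j; rewrite in_cons.
case: eqP => [-> _|ji /= jl]; first by rewrite eig_proj_sigma.
by rewrite eig_proj_comm ht // linearZ.
Qed.

Lemma sum_homogeneous v : exists ws : seq g,
  v = \sum_(w <- ws) w /\ forall w, w \in ws -> exists t : Zn N, w \in gr t.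
Proof.
have [ws [-> hws]] := sum_joint_eigvecs (enum 'I_N) v.
exists ws; split=> // w /hws[t ht].
exists [ffun i => (t i)%:Z]; apply/mem_grade => i.
by rewrite ffunE ht ?mem_enum.
Qed.

Definition grade_proj (c : Zn N) : 'End(g) :=
  foldr (fun i acc => (eig_proj i `|(c i %% (m i)%:Z)%Z|%N \o acc)%VF) \1%VF (enum 'I_N).

Lemma grade_proj_hom c b w : w \in gr b ->
  grade_proj c w = (cls m b == cls m c)%:R *: w.
Proof.
move/mem_gradeN => hw; rewrite cls_eq_mod /grade_proj.
elim: (enum 'I_N) => [|i l IH] /=; first by rewrite id_lfunE scale1r.
rewrite comp_lfunE IH linearZ /= (eig_proj_eig (modm_lt _ _) (modm_lt _ _) (hw i)).
by rewrite scalerA -natrM mulnb andbC.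
Qed.

End Grading.

Section LieBracket.
Variables (F : fieldType) (g : vectType F) (br : g -> g -> g).
Hypothesis hlie : is_lie_bracket br.

Lemma br0r z : br z 0 = 0.
Proof.
have [_ h _ _] := hlie; have := h (-1) 0 0 z.
by rewrite scaler0 addr0 scaleN1r addNr.
Qed.

Lemma br0l z : br 0 z = 0.
Proof.
have [h _ _ _] := hlie; have := h (-1) 0 0 z.
by rewrite scaler0 addr0 scaleN1r addNr.
Qed.

Lemma brDl z x y : br (x + y) z = br x z + br y z.
Proof. by have [h _ _ _] := hlie; have := h 1 x y z; rewrite !scale1r. Qed.

Lemma brZl z a x : br (a *: x) z = a *: br x z.
Proof. by have [h _ _ _] := hlie; have := h a x 0 z; rewrite !addr0 br0l addr0. Qed.

Lemma brZr z a x : br z (a *: x) = a *: br z x.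
Proof. by have [_ h _ _] := hlie; have := h a x 0 z; rewrite !addr0 br0r addr0. Qed.

Lemma exists_ad y : exists f : 'End(g), forall v, f v = br y v.
Proof.
by apply: exists_lfun => a x z; have [_ h _ _] := hlie; apply: h.
Qed.

Variable N : nat.

(* w (x) t^d, as a finitely supported map Z^N -> g. *)
Definition single (d : Zn N) (w : g) : Zn N -> g := fun a => if a == d then w else 0.

Lemma supported_single d w : supported (single d w) [:: d].
Proof. by move=> a; rewrite inE /single => /negPf ->. Qed.

(* f (x) t^d acting on g (x) R: multiply the coefficients by f, shift degrees by d. *)
Definition shift_op (f : 'End(g)) (d : Zn N) (X : Zn N -> g) : Zn N -> g :=
  fun a => f (X (a - d)).

Lemma loop_br_single (w : g) (d : Zn N) (f : 'End(g)) X s :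
  (forall v, f v = br w v) -> supported X s ->
  loop_br br [:: d] s (single d w) X = shift_op f d X.
Proof.
move=> fE Xs; apply: functional_extensionality => k.
rewrite /loop_br /shift_op /= big_seq1 /single eqxx fE big_mkcond /=.
have addE b : (d + b == k) = (b == k - d) by rewrite [RHS]eq_sym subr_eq eq_sym addrC.
have [ks|ks] := boolP (k - d \in s).
  rewrite (bigD1_seq (k - d)) ?undup_uniq ?mem_undup //= addE eqxx big1 ?addr0 //.
  by move=> b /negPf bn; rewrite addE bn.
rewrite Xs // br0r big1_seq // => b /andP[_ bs]; rewrite addE.
by case: eqP => // bE; move: bs ks; rewrite bE mem_undup => ->.
Qed.

End LieBracket.

Section IdealOperators.
Variables (F : closedFieldType) (g : vectType F) (br : g -> g -> g) (N : nat)
  (sigma : 'I_N -> 'End(g)) (m : 'I_N -> nat) (xi : 'I_N -> F)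
  (I : (Zn N -> g) -> Prop).
Hypothesis hF : [pchar F] =i pred0.
Hypothesis hg : simple_lie br.
Hypothesis haut : forall i, lie_aut br (sigma i).
Hypothesis hcomm : forall i j, (sigma i \o sigma j = sigma j \o sigma i)%VF.
Hypothesis hord : forall i, has_order (sigma i) (m i).
Hypothesis hxi : forall i, (m i).-primitive_root (xi i).
Hypothesis hI : loop_ideal br sigma xi I.

Local Notation gr := (grade sigma xi).

Let hlie : is_lie_bracket br. Proof. by case: hg. Qed.

Definition preserves_ideal (f : 'End(g)) (d : Zn N) :=
  forall X, I X -> I (shift_op f d X).

Definition homogeneous (f : 'End(g)) (d : Zn N) :=
  forall b v, v \in gr b -> f v \in gr (b + d).

Definition graded_op (f : 'End(g)) (d : Zn N) :=
  homogeneous f d /\ forall d', cls m d' = cls m d -> preserves_ideal f d'.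

Definition admissible (f : 'End(g)) := exists s : seq ('End(g) * Zn N),
  (forall p, p \in s -> graded_op p.1 p.2) /\ f = \sum_(p <- s) p.1.

Lemma preserves_ideal0 d : preserves_ideal 0 d.
Proof.
move=> X _; have [_ I0 _ _ _] := hI; congr I: I0.
by apply: functional_extensionality => a; rewrite /shift_op zero_lfunE.
Qed.

Lemma preserves_idealD f f' d :
  preserves_ideal f d -> preserves_ideal f' d -> preserves_ideal (f + f') d.
Proof.
move=> hf hf' X IX; have [_ _ ID _ _] := hI.
have -> : shift_op (f + f') d X = fun a => shift_op f d X a + shift_op f' d X a.
  by apply: functional_extensionality => a; rewrite /shift_op add_lfunE.
by apply: ID; [apply: hf | apply: hf'].
Qed.

Lemma preserves_idealZ c f d : preserves_ideal f d -> preserves_ideal (c *: f) d.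
Proof.
move=> hf X IX; have [_ _ _ IZ _] := hI.
have -> : shift_op (c *: f) d X = fun a => c *: shift_op f d X a.
  by apply: functional_extensionality => a; rewrite /shift_op scale_lfunE.
by apply: IZ; apply: hf.
Qed.

Lemma preserves_ideal_comp f f' d d' :
  preserves_ideal f d -> preserves_ideal f' d' -> preserves_ideal (f \o f')%VF (d + d').
Proof.
move=> hf hf' X IX.
have -> : shift_op (f \o f')%VF (d + d') X = shift_op f d (shift_op f' d' X).
  by apply: functional_extensionality => a; rewrite /shift_op comp_lfunE opprD addrA.
by apply: hf; apply: hf'.
Qed.

Lemma preserves_ideal_sum (T : eqType) (r : seq T) (fs : T -> 'End(g)) d :
  (forall p, p \in r -> preserves_ideal (fs p) d) -> preserves_ideal (\sum_(p <- r) fs p) d.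
Proof.
elim: r => [|p r IH] hr; first by rewrite big_nil; apply: preserves_ideal0.
rewrite big_cons; apply: preserves_idealD; first by apply: hr; rewrite mem_head.
by apply: IH => q hq; apply: hr; rewrite inE hq orbT.
Qed.

Lemma preserves_ideal_ad w d (f : 'End(g)) :
  w \in gr d -> (forall v, f v = br w v) -> preserves_ideal f d.
Proof.
move=> wd fE X IX; have [inL _ _ _ Ibr] := hI; have [[s Xs] _] := inL X IX.
have Lw : inLoop sigma xi (single d w).
  split; first by exists [:: d]; apply: supported_single.
  by move=> a; rewrite /single; case: eqP => [->|]; rewrite ?mem0v.
have := Ibr _ _ _ _ Lw (@supported_single _ _ _ d w) IX Xs.
by rewrite (loop_br_single hlie d fE Xs).
Qed.

(* The sigma_i are automorphisms, so the bracket is graded. *)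
Lemma br_grade d b y v : y \in gr d -> v \in gr b -> br y v \in gr (d + b).
Proof.
move=> /mem_grade hy /mem_grade hv; apply/mem_grade => i.
have [_ ->] := haut i; rewrite hy hv (brZl hlie) (brZr hlie) scalerA ffunE expfzDr //.
exact: (xi_neq0 hord hxi).
Qed.

Lemma graded_op_ad w d (f : 'End(g)) :
  w \in gr d -> (forall v, f v = br w v) -> graded_op f d.
Proof.
move=> wd fE; split=> [b v vb|d' dd']; first by rewrite fE addrC br_grade.
by apply: preserves_ideal_ad fE; rewrite -(grade_cls hord hxi) dd' (grade_cls hord hxi).
Qed.

Lemma graded_op_comp f f' d d' :
  graded_op f d -> graded_op f' d' -> graded_op (f \o f')%VF (d + d').
Proof.
move=> [fhom fI] [f'hom f'I]; split.
  by move=> b v /f'hom /fhom; rewrite comp_lfunE -addrA [d' + d]addrC.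
move=> e he; rewrite -(subrK d' e); apply: preserves_ideal_comp; last exact: f'I.
by apply: fI; apply: (cls_diff _ he); rewrite opprD addrA addrAC.
Qed.

Lemma graded_opZ c f d : graded_op f d -> graded_op (c *: f) d.
Proof.
move=> [fhom fI]; split=> [b v /fhom|d' /fI]; first by rewrite scale_lfunE; apply: memvZ.
exact: preserves_idealZ.
Qed.

Lemma admissibleD f f' : admissible f -> admissible f' -> admissible (f + f').
Proof.
move=> [s [hs ->]] [s' [hs' ->]]; exists (s ++ s'); split; last by rewrite big_cat.
by move=> p; rewrite mem_cat => /orP[/hs|/hs'].
Qed.

Lemma admissibleZ c f : admissible f -> admissible (c *: f).
Proof.
move=> [s [hs ->]]; exists [seq (c *: p.1, p.2) | p <- s]; split.
  by move=> _ /mapP[p ps ->]; apply: graded_opZ; apply: hs.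
by rewrite big_map scaler_sumr.
Qed.

Lemma admissible_comp f f' : admissible f -> admissible f' -> admissible (f \o f')%VF.
Proof.
move=> [s [hs ->]] [s' [hs' ->]].
exists [seq ((p.1 \o q.1)%VF, p.2 + q.2) | p <- s, q <- s']; split.
  move=> _ /allpairsP[[p q] /= [ps qs ->]].
  by apply: graded_op_comp; [apply: hs | apply: hs'].
apply/lfunP => v; rewrite comp_lfunE !sum_lfunE big_allpairs_dep /=.
by apply: eq_bigr => p _; rewrite linear_sum; apply: eq_bigr => q _; rewrite comp_lfunE.
Qed.

(* ad y is admissible: decompose y into homogeneous components. *)
Lemma admissible_ad y (f : 'End(g)) : (forall v, f v = br y v) -> admissible f.
Proof.
have [ws [-> hws]] := sum_homogeneous hF hcomm hord hxi y.
elim: ws hws f => [|w ws IH] hws f fE.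
  exists [::]; split=> //; apply/lfunP => v.
  by rewrite fE !big_nil (br0l hlie) zero_lfunE.
have [fw fwE] := exists_ad hlie w.
have [fr frE] := exists_ad hlie (\sum_(x <- ws) x).
have -> : f = fw + fr.
  by apply/lfunP => v; rewrite fE add_lfunE fwE frE big_cons (brDl hlie).
apply: admissibleD; last by apply: IH => // x xs; apply: hws; rewrite inE xs orbT.
have [t wt] := hws w (mem_head _ _).
exists [:: (fw, t)]; split; last by rewrite big_seq1.
by move=> p; rewrite inE => /eqP -> /=; apply: graded_op_ad wt fwE.
Qed.

Lemma admissible_irr (U : {vspace g}) :
  (forall f u, admissible f -> u \in U -> f u \in U) -> U = 0%VS \/ U = fullv.
Proof.
move=> Uinv; have [_ _ simple] := hg; apply: simple => x u uU.
have [f fE] := exists_ad hlie x.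
by rewrite -fE; apply: Uinv (admissible_ad fE) uU.
Qed.

Lemma admissible_nz : exists f, admissible f /\ f != 0.
Proof.
have [_ [x [y nz]] _] := hg; have [f fE] := exists_ad hlie x.
exists f; split; first exact: admissible_ad fE.
by apply: contra nz => /eqP f0; rewrite -fE f0 zero_lfunE.
Qed.

Lemma admissible_line_maps (z : g) (h : 'End(g)) : into_line z h -> admissible h.
Proof.
have [T [AT T0 Tmin]] := alg_min_rank admissible_nz.
exact: (alg_line_maps admissibleD admissibleZ admissible_comp admissible_nz
          admissible_irr AT T0 Tmin).
Qed.

(* The degree-d component of an admissible operator preserves I up to the
   shift by d: it is the sum of the summands of degree congruent to d. *)
Lemma admissible_component f d : admissible f -> exists phi, preserves_ideal phi d /\
  forall b v, v \in gr b -> phi v = grade_proj sigma m xi (b + d) (f v).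
Proof.
move=> [s [hs ->]]; exists (\sum_(p <- s | cls m p.2 == cls m d) p.1); split.
  rewrite -big_filter; apply: preserves_ideal_sum => p.
  by rewrite mem_filter => /andP[/eqP pd ps]; apply: (proj2 (hs p ps)).
move=> b v vb; rewrite !sum_lfunE linear_sum big_mkcond /=.
apply: eq_big_seq => p ps.
rewrite (grade_proj_hom hF hord hxi _ ((proj1 (hs p ps)) b v vb)).
have -> : (cls m (b + p.2) == cls m (b + d)) = (cls m p.2 == cls m d).
  by apply/eqP/eqP => pd; apply: (cls_diff _ pd); rewrite opprD addrACA subrr add0r.
by case: ifP; rewrite ?scale1r ?scale0r.
Qed.

Lemma pcoord_proj (B : Zn N -> seq g) (l : Zn N) (j : 'I_(size (B (cls m l))))
  (Y : Zn N -> g) b : Y b \in gr b ->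
  pcoord m B (cls m l) j Y b = coord (in_tuple (B (cls m l))) j (grade_proj sigma m xi l (Y b)).
Proof.
move=> Yb; rewrite /pcoord (grade_proj_hom hF hord hxi l Yb) linearZ /=.
by case: eqP; rewrite ?mul1r ?mul0r.
Qed.

Lemma proj_coord_homogeneous (s : seq g) (j : 'I_(size s)) (l k : Zn N) (z : g)
  (e : 'End(g)) : z \in gr k ->
  (forall v, e v = coord (in_tuple s) j (grade_proj sigma m xi l v) *: z) ->
  homogeneous e (k - l).
Proof.
move=> zk eE b v vb; rewrite eE (grade_proj_hom hF hord hxi l vb).
case: eqP => [bl|_]; last by rewrite scale0r linear0 scale0r mem0v.
rewrite scale1r memvZ // -(grade_cls hord hxi) (cls_diff (c := b + (k - l)) (d := k) _ bl).
  by rewrite (grade_cls hord hxi).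
by rewrite [k - l]addrC addrA addrK.
Qed.

End IdealOperators.

Theorem lemma2p2 (F : closedFieldType) (hF : [pchar F] =i pred0)
  (g : vectType F) (br : g -> g -> g) (hg : simple_lie br)
  (N : nat) (sigma : 'I_N -> 'End(g)) (m : 'I_N -> nat) (xi : 'I_N -> F)
  (haut : forall i, lie_aut br (sigma i))
  (hcomm : forall i j, (sigma i \o sigma j = sigma j \o sigma i)%VF)
  (hord : forall i, has_order (sigma i) (m i))
  (hxi : forall i, (m i).-primitive_root (xi i))
  (B : Zn N -> seq g)
  (hB : forall k, basis_of (grade sigma xi (cls m k)) (B (cls m k)))
  (I : (Zn N -> g) -> Prop) (hI : loop_ideal br sigma xi I)
  (Y : Zn N -> g) (hY : I Y) :
  forall (k l : Zn N) (i : 'I_(size (B (cls m k)))) (j : 'I_(size (B (cls m l)))),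
    I (fun a => pcoord m B (cls m l) j Y (a - (k - l)) *: (B (cls m k))`_i).
Proof.
move=> k l i j; set z := (B (cls m k))`_i.
have [inL _ _ _ _] := hI; have [_ Yhom] := inL Y hY.
have zk : z \in grade sigma xi k.
  by rewrite -(grade_cls hord hxi) (basis_mem (hB k)) ?mem_nth.
have [e eE] : exists e : 'End(g),
    forall v, e v = coord (in_tuple (B (cls m l))) j (grade_proj sigma m xi l v) *: z.
  by apply: exists_lfun => c x y; rewrite !linearP /= scalerDl scalerA.
have e_line : into_line z e by move=> v; rewrite eE memvZ ?memv_line.
have e_hom := proj_coord_homogeneous hF hord hxi zk eE.
(* By Burnside e is admissible; its degree-(k - l) part phi (x) t^(k - l)
   preserves I and sends Y to the element in question. *)
have e_adm := admissible_line_maps hF hg haut hcomm hord hxi hI e_line.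
have [phi [phiI phiE]] := admissible_component hF hord hxi hI (k - l) e_adm.
congr I: (phiI Y hY); apply: functional_extensionality => a.
rewrite /shift_op (phiE _ _ (Yhom _)) (grade_proj_hom hF hord hxi _ (e_hom _ _ (Yhom _))) eqxx.
by rewrite scale1r eE (pcoord_proj hF hord hxi).
Qed.
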